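(* For any $1\le s\le t$, the elements of $P(t,s)=P(t)P(t-1)\cdots P(s)$ are CD-rationals over $O((t-s+1)n\log n)$ bits, and every nonzero element of $P(t,s)$ is at least $n^{-O(n^2)}$.
   Context: For each $t\ge1$, $G_t$ is an undirected graph without self-loops on $\{1,\dots,n\}$ with degrees $d_i(t)$ and Laplacian $L_t$; $C_t=\mathrm{diag}(c_1(t),\dots,c_n(t))$ where each $c_i(t)$ is a rational encoded over $O(\log n)$ bits with $0<c_i(t)d_i(t)<1$; and $P(t)=I_n-C_tL_t$. A collection of numbers is a set of CD-rationals over $k$ bits if they can be written as $p_i/q$ with a common denominator $q$, all $p_i$ and $q$ being integers of $O(k)$ bits (the bound stated). $O(\cdot)$ hides absolute constants; $n$ is assumed large. *)

From HB Require Import structures.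
From mathcomp Require Import all_boot all_order all_algebra.
Set Implicit Arguments. Unset Strict Implicit. Unset Printing Implicit Defensive.
Import Order.TTheory GRing.Theory Num.Theory.
Local Open Scope ring_scope.

Definition fits_bits (z : int) (k : nat) : bool := (absz z < 2 ^ k)%N.

(* log_2 n, rounded up (the base and rounding only affect O-constants). *)
Definition log2 (n : nat) : nat := up_log 2 n.

Definition rat_over_bits (r : rat) (k : nat) : Prop :=
  exists (p q : int), (0 < q) /\ fits_bits p k /\ fits_bits q k /\ r = p%:~R / q%:~R.

(* A family of numbers (the entries of an n x n matrix) is a set of CD-rationals
   over k bits: common denominator q, all numerators and q of <= k bits. *)
Definition CD_rationals_mx (n : nat) (M : 'M[rat]_n) (k : nat) : Prop :=
  exists (q : int) (p : 'I_n -> 'I_n -> int),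
    (0 < q) /\ fits_bits q k /\
    (forall i j, fits_bits (p i j) k) /\
    (forall i j, M i j = (p i j)%:~R / q%:~R).

Definition simple_graph (n : nat) (E : rel 'I_n) : Prop :=
  (forall i j, E i j = E j i) /\ (forall i, E i i = false).

Definition deg (n : nat) (E : rel 'I_n) (i : 'I_n) : nat := #|[set j | E i j]|.

Definition laplacian (n : nat) (E : rel 'I_n) : 'M[rat]_n :=
  \matrix_(i, j) ((if i == j then (deg E i)%:R else 0) - (if E i j then 1 else 0)).

Definition Pmat (n : nat) (E : nat -> rel 'I_n) (c : nat -> 'I_n -> rat) (t : nat)
  : 'M[rat]_n :=
  1%:M - diag_mx (\row_i c t i) *m laplacian (E t).

(* Pprod s k = P(s+k) P(s+k-1) ... P(s) *)
Fixpoint Pprod (n : nat) (E : nat -> rel 'I_n) (c : nat -> 'I_n -> rat) (s k : nat)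
  : 'M[rat]_n :=
  match k with
  | 0 => Pmat E c s
  | k'.+1 => Pmat E c (s + k'.+1) *m Pprod E c s k'
  end.

Definition Pts (n : nat) (E : nat -> rel 'I_n) (c : nat -> 'I_n -> rat) (t s : nat)
  : 'M[rat]_n := Pprod E c s (t - s).

From HB Require Import structures.
From mathcomp Require Import all_boot all_order all_algebra.
From mathcomp Require Import zify.
Set Implicit Arguments. Unset Strict Implicit. Unset Printing Implicit Defensive.
Import Order.TTheory GRing.Theory Num.Theory.
Local Open Scope ring_scope.

(* Each P(t) is a lazy random-walk matrix: it is stochastic, has a positive
   diagonal and a symmetric support, and since every c_i(t) has a denominator
   below 2^K (K = a log n), every nonzero entry is at least 2^-K and row i
   becomes integral after scaling by that denominator.  So P(t) has a common
   denominator at most 2^(K n), and a product of m such matrices one at most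
   2^(K n m); products stay stochastic, so the numerators lie in [0, D].
   For the lower bound, follow the support of a column of the product: it never
   shrinks, and a nonzero entry of a column whose support has r elements is at
   least 2^(-K (r - 1)).  If the support does not grow, a new entry is a convex
   combination of old nonzero entries (they are in the support because the
   support of P(t) is symmetric); if it grows, the extra factor 2^-K is paid
   for.  Hence nonzero entries are at least 2^(-K n) >= n^(-2 a n). *)

Section StochasticProducts.

Variables (R : realFieldType) (n : nat).
Implicit Types (P M : 'M[R]_n) (beta : R).

Definition nonneg_mx M := forall i j, 0 <= M i j.

Definition stochastic M :=
  nonneg_mx M /\ M *m const_mx 1 = const_mx 1 :> 'cV_n.

Definition col_supp M j := [set k | M k j != 0].

Definition nonzero_ge beta M := forall i j, M i j != 0 -> beta <= M i j.

Definition supp_bounded beta M :=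
  forall i j, M i j != 0 -> beta ^+ #|col_supp M j|.-1 <= M i j.

Lemma stochasticP M :
  stochastic M <-> nonneg_mx M /\ forall i, \sum_j M i j = 1.
Proof.
rewrite /stochastic; split=> -[M0 M1]; split=> //.
  move=> i; move/matrixP: M1 => /(_ i ord0); rewrite !mxE => <-.
  by apply: eq_bigr => j _; rewrite mxE mulr1.
apply/matrixP => i k; rewrite !mxE -[RHS](M1 i).
by apply: eq_bigr => j _; rewrite mxE mulr1.
Qed.

Lemma stochastic1 : stochastic 1%:M.
Proof. by split; [move=> i j; rewrite mxE; case: eqP | rewrite mul1mx]. Qed.

Lemma stochastic_mul P M : stochastic P -> stochastic M -> stochastic (P *m M).
Proof.
move=> [P0 P1] [M0 M1]; split; last by rewrite -mulmxA M1.
by move=> i j; rewrite mxE; apply: sumr_ge0 => k _; apply: mulr_ge0.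
Qed.

Lemma stochastic_le1 M i j : stochastic M -> M i j <= 1.
Proof.
move/stochasticP=> [M0 M1]; rewrite -(M1 i) (bigD1 j) //= lerDl.
by apply: sumr_ge0.
Qed.

Lemma mulmx_ge_term P M i j k :
  nonneg_mx P -> nonneg_mx M -> P i k * M k j <= (P *m M) i j.
Proof.
move=> P0 M0; rewrite mxE (bigD1 k) //= lerDl.
by apply: sumr_ge0 => l _; apply: mulr_ge0.
Qed.

Lemma mulmx_neq0 P M i j k : nonneg_mx P -> nonneg_mx M ->
  P i k != 0 -> M k j != 0 -> (P *m M) i j != 0.
Proof.
move=> P0 M0 Pik Mkj; apply: lt0r_neq0; apply: lt_le_trans (mulmx_ge_term i j k P0 M0).
by rewrite lt0r mulf_neq0 //= mulr_ge0.
Qed.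

Lemma mulmx_ge_convex P M i j (m : R) : stochastic P ->
  (forall k, P i k != 0 -> m <= M k j) -> m <= (P *m M) i j.
Proof.
move=> /stochasticP[P0 P1] Mm; rewrite mxE -[m]mul1r -(P1 i) mulr_suml.
apply: ler_sum => k _; have [->|Pik] := eqVneq (P i k) 0; first by rewrite !mul0r.
by rewrite ler_wpM2l // Mm.
Qed.

Lemma col_supp_mulmx P M j : nonneg_mx P -> nonneg_mx M ->
  (forall i, P i i != 0) -> col_supp M j \subset col_supp (P *m M) j.
Proof.
move=> P0 M0 Pd; apply/subsetP => k; rewrite !inE.
exact: mulmx_neq0 P0 M0 (Pd k).
Qed.

Lemma supp_bounded1 beta : supp_bounded beta 1%:M.
Proof.
move=> i j; have -> : col_supp 1%:M j = [set j].
  by apply/setP => k; rewrite !inE mxE; case: (k == j); rewrite ?oner_eq0 ?eqxx.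
by rewrite cards1 expr0 mxE; case: (i == j); rewrite ?eqxx.
Qed.

Lemma supp_bounded_mul beta P M : 0 < beta -> beta <= 1 ->
  stochastic P -> nonzero_ge beta P ->
  (forall i j, (P i j != 0) = (P j i != 0)) -> (forall i, P i i != 0) ->
  stochastic M -> supp_bounded beta M -> supp_bounded beta (P *m M).
Proof.
move=> beta_gt0 beta_le1 Pst Pge Psym Pdiag Mst Mge i j PMij.
have [[P0 _] [M0 _]] := (Pst, Mst).
set x := col_supp M j; set y := col_supp (P *m M) j.
have sub_xy : x \subset y by apply: col_supp_mulmx.
have [eq_xy | lt_xy] := eqVneq #|x| #|y|.
  have {eq_xy} xy : x = y by apply/eqP; rewrite eqEcard sub_xy eq_xy leqnn.
  have in_x k : (k \in x) = (M k j != 0) by rewrite inE.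
  have Mij : M i j != 0 by rewrite -in_x xy inE.
  rewrite -xy; apply: mulmx_ge_convex => // k Pik; apply: Mge.
  by rewrite -in_x xy inE (mulmx_neq0 P0 M0 _ Mij) // -Psym.
have [k /andP[Pik Mkj]] : exists k, (P i k != 0) && (M k j != 0).
  apply/existsP; apply: contraNT PMij; rewrite negb_exists => /forallP nz.
  rewrite mxE big1 // => k _; apply/eqP; rewrite mulf_eq0; move: (nz k).
  by rewrite negb_and !negbK.
have x0 : (0 < #|x|)%N by apply/card_gt0P; exists k; rewrite inE.
have le_xy : (#|x| <= #|y|.-1)%N.
  by rewrite -ltnS (@ltn_predK #|x|) // ltn_neqAle lt_xy subset_leq_card.
apply: le_trans (mulmx_ge_term _ _ k P0 M0).
apply: (@le_trans _ _ (beta ^+ #|x|)); first exact: ler_wiXn2l (ltW _) _ _ _ le_xy.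
by rewrite -(prednK x0) exprS ler_pM ?exprn_ge0 ?(ltW beta_gt0) ?Pge ?Mge.
Qed.

End StochasticProducts.

Section CommonDenominators.

Variables (R : archiNumFieldType) (n : nat).

Definition denom_mx (D : nat) (M : 'M[R]_n) :=
  forall i j, D%:R * M i j \is a Num.int.

Lemma denom_mx1 : denom_mx 1 1%:M.
Proof. by move=> i j; rewrite mul1r mxE; case: (i == j); rewrite ?rpred0 ?rpred1. Qed.

Lemma denom_mx_mul D1 D2 (P M : 'M[R]_n) :
  denom_mx D1 P -> denom_mx D2 M -> denom_mx (D1 * D2) (P *m M).
Proof.
move=> DP DM i j; rewrite mxE mulr_sumr; apply: rpred_sum => k _.
by rewrite natrM mulrACA rpredM.
Qed.

Lemma denom_mx_prod (Q : 'I_n -> nat) (M : 'M[R]_n) :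
  (forall i j, (Q i)%:R * M i j \is a Num.int) -> denom_mx (\prod_i Q i) M.
Proof.
move=> QM i j; rewrite (bigD1 i) //= natrM mulrAC.
by rewrite rpredM ?natr_int ?QM.
Qed.

Lemma invn_le_of_int_mul (x : R) (Q B : nat) : 0 < x -> (0 < Q <= B)%N ->
  Q%:R * x \is a Num.int -> B%:R^-1 <= x.
Proof.
move=> x0 /andP[Q0 QB] Qx.
have B0 : (0 < B)%N by apply: leq_trans QB.
have Qx1 : 1 <= Q%:R * x.
  rewrite -[Q%:R * x]ger0_norm ?mulr_ge0 ?ler0n ?(ltW x0) //.
  apply: norm_intr_ge1 => //.
  by rewrite mulf_neq0 ?gt_eqF ?ltr0n.
rewrite -div1r ler_pdivrMr ?ltr0n // mulrC.
by apply: le_trans Qx1 _; rewrite ler_wpM2r ?(ltW x0) ?ler_nat.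
Qed.

End CommonDenominators.

Lemma rat_over_bits_denom (r : rat) K : rat_over_bits r K ->
  exists2 Q : nat, (0 < Q < 2 ^ K)%N & Q%:R * r \is a Num.int.
Proof.
move=> [p [[Q|Q] [//= Q0 [_ [QK ->]]]]]; exists Q; first by rewrite -ltz_nat Q0.
by rewrite mulrC mulfVK ?intr_int // intr_eq0 gt_eqF.
Qed.

Section WalkMatrix.

Variables (n : nat) (E : nat -> rel 'I_n) (c : nat -> 'I_n -> rat) (t : nat).
Hypothesis simpleE : simple_graph (E t).
Hypothesis c_deg : forall i, 0 < c t i * (deg (E t) i)%:R < 1.

Let P := Pmat E c t.

Lemma Pmat_diag i : P i i = 1 - c t i * (deg (E t) i)%:R.
Proof. by rewrite /P /Pmat mul_diag_mx !mxE eqxx simpleE.2 subr0. Qed.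

Lemma Pmat_off i j : i != j -> P i j = if E t i j then c t i else 0.
Proof.
move=> ij; rewrite /P /Pmat mul_diag_mx !mxE (negbTE ij) sub0r add0r mulrN opprK.
by case: (E t i j); rewrite ?mulr1 ?mulr0.
Qed.

Lemma c_gt0 i : 0 < c t i.
Proof.
have /andP[cd0 _] := c_deg i.
by move: cd0; case: (deg _ i) => [|d]; rewrite ?mulr0 ?ltxx // pmulr_lgt0.
Qed.

Lemma Pmat_diag_gt0 i : 0 < P i i.
Proof. by rewrite Pmat_diag subr_gt0; case/andP: (c_deg i). Qed.

Lemma Pmat_stochastic : stochastic P.
Proof.
apply/stochasticP; split.
  move=> i j; have [<-|ij] := eqVneq i j; first exact/ltW/Pmat_diag_gt0.
  by rewrite Pmat_off //; case: (E t i j) => //; exact/ltW/c_gt0.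
move=> i; rewrite (bigD1 i) //= Pmat_diag.
have -> : \sum_(j | j != i) P i j = \sum_j (if E t i j then c t i else 0).
  rewrite [RHS](bigD1 i) //= simpleE.2 add0r; apply: eq_bigr => j ji.
  by rewrite Pmat_off // eq_sym.
by rewrite -big_mkcond sumr_const /deg cardsE -[c t i *+ _]mulr_natr subrK.
Qed.

Lemma Pmat_supp_sym i j : (P i j != 0) = (P j i != 0).
Proof.
have [->|ij] := eqVneq i j; first by [].
have ji : j != i by rewrite eq_sym.
rewrite !Pmat_off // (simpleE.1 j).
by case: (E t i j); rewrite // !gt_eqF ?c_gt0.
Qed.

Variable K : nat.
Hypothesis c_bits : forall i, rat_over_bits (c t i) K.

Lemma Pmat_row_denom i : exists2 Q : nat, (0 < Q < 2 ^ K)%N &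
  forall j, Q%:R * P i j \is a Num.int.
Proof.
have [Q QK Qc] := rat_over_bits_denom (c_bits i); exists Q => // j.
have [<-|ij] := eqVneq i j.
  rewrite Pmat_diag mulrBr mulr1 mulrA.
  by apply: rpredB; [exact: natr_int | apply: rpredM; [exact: Qc | exact: natr_int]].
by rewrite Pmat_off //; case: (E t i j); rewrite ?mulr0 ?rpred0.
Qed.

Lemma Pmat_nonzero_ge : nonzero_ge (2 ^ K)%:R^-1 P.
Proof.
move=> i j Pij; have [Q /andP[Q0 QK] QP] := Pmat_row_denom i.
apply: (invn_le_of_int_mul _ _ (QP j)); last by rewrite Q0 ltnW.
by rewrite lt_def Pij (Pmat_stochastic.1 i j).
Qed.

Lemma Pmat_denom : exists2 D, (0 < D <= (2 ^ K) ^ n)%N & denom_mx D P.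
Proof.
have [Q QK QP] := fin_all_exists2 Pmat_row_denom.
exists (\prod_i Q i); last exact: denom_mx_prod.
rewrite prodn_gt0 => [|i]; last by case/andP: (QK i).
apply: (@leq_trans (\prod_(i < n) 2 ^ K)); last by rewrite prod_nat_const card_ord.
by apply: leq_prod => i _; case/andP: (QK i) => _ /ltnW.
Qed.

End WalkMatrix.

Section WalkProducts.

Variables (n : nat) (E : nat -> rel 'I_n) (c : nat -> 'I_n -> rat) (s K : nat).
Hypothesis s_gt0 : (0 < s)%N.
Hypothesis simpleE : forall t, (0 < t)%N -> simple_graph (E t).
Hypothesis c_bits : forall t i, (0 < t)%N -> rat_over_bits (c t i) K.
Hypothesis c_deg : forall t i, (0 < t)%N -> 0 < c t i * (deg (E t) i)%:R < 1.

Let beta : rat := (2 ^ K)%:R^-1.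

Definition walk_prod_inv m (M : 'M[rat]_n) :=
  [/\ stochastic M, supp_bounded beta M &
      exists2 D, (0 < D <= ((2 ^ K) ^ n) ^ m)%N & denom_mx D M].

Lemma walk_prod_inv_mul t m M : (s <= t)%N ->
  walk_prod_inv m M -> walk_prod_inv m.+1 (Pmat E c t *m M).
Proof.
move=> st [Mst Mge [D /andP[D0 DB] DM]].
have t_gt0 : (0 < t)%N := leq_trans s_gt0 st.
have hc i := c_bits i t_gt0.
have hd i := c_deg i t_gt0.
have hE := simpleE t_gt0.
have [DP /andP[DP0 DPB] DPM] := Pmat_denom hE hc.
have beta_gt0 : 0 < beta by rewrite invr_gt0 ltr0n expn_gt0.
have beta_le1 : beta <= 1 by rewrite invf_le1 ?ler1n ?ltr0n expn_gt0.
split.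
- exact: stochastic_mul (Pmat_stochastic hE hd) Mst.
- apply: supp_bounded_mul => //.
  + exact: Pmat_stochastic.
  + exact: Pmat_nonzero_ge.
  + exact: Pmat_supp_sym.
  + by move=> i; rewrite gt_eqF ?Pmat_diag_gt0.
- exists (DP * D)%N; last exact: denom_mx_mul.
  by rewrite muln_gt0 DP0 D0 expnS leq_mul.
Qed.

Lemma Pprod_inv k : walk_prod_inv k.+1 (Pprod E c s k).
Proof.
elim: k => [|k IHk] /=; last by apply: walk_prod_inv_mul; rewrite ?leq_addr.
rewrite -[Pmat E c s]mulmx1; apply: walk_prod_inv_mul => //.
split; [exact: stochastic1 | exact: supp_bounded1 |].
by exists 1%N; rewrite ?expn0 //; apply: denom_mx1.
Qed.

End WalkProducts.

Lemma CD_rationals_of_denom n (M : 'M[rat]_n) D k :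
  stochastic M -> denom_mx D M -> (0 < D < 2 ^ k)%N -> CD_rationals_mx M k.
Proof.
move=> Mst DM /andP[D0 Dk].
have floorK i j : (Num.floor (D%:R * M i j))%:~R = D%:R * M i j.
  by apply/eqP; rewrite -intrEfloor.
exists D, (fun i j => Num.floor (D%:R * M i j)); split; first by rewrite ltz_nat.
split; first exact: Dk.
split=> [i j|i j]; last first.
  by rewrite floorK -[(Posz D)%:~R]/(D%:R : rat) mulrAC divff ?mul1r // pnatr_eq0 -lt0n.
have : 0 <= ((Num.floor (D%:R * M i j))%:~R : rat) <= D%:R.
  by rewrite floorK mulr_ge0 ?ler_piMr ?Mst.1 ?(stochastic_le1 i j Mst).
rewrite ler0z -[D%:R]/((Posz D)%:~R : rat) ler_int.
case: (Num.floor _) => // p /andP[_]; rewrite lez_nat => pD.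
exact: leq_ltn_trans pD Dk.
Qed.

Lemma exp2_log2_le_sqr n : (1 < n)%N -> (2 ^ log2 n <= n ^ 2)%N.
Proof.
move=> n_gt1; have := up_log_gtn (isT : (1 < 2)%N) n_gt1.
have : (0 < log2 n)%N by rewrite up_log_gt0 n_gt1.
rewrite /log2; case: (up_log 2 n) => //= L _; rewrite expnS; nia.
Qed.

Lemma inv_exp2_log2_ge n a m : (1 < n)%N -> (m <= n)%N ->
  (n%:R : rat) ^- (2 * a * n ^ 2) <= (2 ^ (a * log2 n))%:R^-1 ^+ m.
Proof.
move=> n_gt1 mn; have n_gt0 : (0 < n)%N := ltnW n_gt1.
rewrite exprVn -!natrX lef_pV2 ?posrE ?ltr0n ?expn_gt0 ?n_gt0 // ler_nat.
apply: (@leq_trans ((2 ^ log2 n) ^ (a * n))).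
  by rewrite -!expnM leq_pexp2l //; nia.
apply: (@leq_trans ((n ^ 2) ^ (a * n))).
  have [->|an_gt0] := posnP (a * n); first by [].
  by rewrite leq_exp2r // exp2_log2_le_sqr.
by rewrite -expnM leq_pexp2l //; nia.
Qed.

Theorem lemma3p1 :
  forall a : nat, (* constant in the O(log n) bit bound for the c_i(t) *)
  exists b e N : nat,
  forall (n : nat), (N <= n)%N ->
  forall (E : nat -> rel 'I_n) (c : nat -> 'I_n -> rat),
    (forall t, (1 <= t)%N -> simple_graph (E t)) ->
    (forall t i, (1 <= t)%N -> rat_over_bits (c t i) (a * log2 n)) ->
    (forall t i, (1 <= t)%N -> 0 < c t i * (deg (E t) i)%:R < 1) ->
  forall s t : nat, (1 <= s)%N -> (s <= t)%N ->
    CD_rationals_mx (Pts E c t s) (b * (t - s + 1) * n * log2 n) /\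
    (forall i j, Pts E c t s i j != 0 ->
       (n%:R : rat) ^- (e * n ^ 2) <= Pts E c t s i j).
Proof.
move=> a; exists a.+1, (2 * a)%N, 2 => n n_gt1 E c hE hc hd s t s_gt0 st.
have L_gt0 : (0 < log2 n)%N by rewrite up_log_gt0 n_gt1.
have [Mst Mge [D /andP[D0 DB] DM]] := Pprod_inv s_gt0 hE hc hd (t - s).
rewrite /Pts; split.
  apply: CD_rationals_of_denom Mst DM _; rewrite D0 (leq_ltn_trans DB) //.
  by rewrite -!expnM ltn_exp2l //; nia.
move=> i j Mij; apply: le_trans (Mge i j Mij); apply: inv_exp2_log2_ge => //.
by rewrite (leq_trans (leq_pred _)) // (leq_trans (max_card _)) ?card_ord.
Qed.
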